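(* Let $d=p\geq 2$ be a prime number and let $\varGamma$ be a lattice in $\mathbb{R}^p$. Then the factor group $\operatorname{SOS}(\varGamma)/\operatorname{SOC}(\varGamma)$ is an elementary Abelian $p$-group, i.e., it is the direct sum of cyclic groups of order $p$.
   Context: A lattice in $\mathbb{R}^d$ is a subgroup of the form $\mathbb{Z}b_1\oplus\cdots\oplus\mathbb{Z}b_d$ where $\{b_1,\dots,b_d\}$ is a basis of $\mathbb{R}^d$. Two lattices $\varGamma,\varGamma'$ are commensurate, written $\varGamma\sim\varGamma'$, if $\varGamma\cap\varGamma'$ has finite index both in $\varGamma$ and in $\varGamma'$. $\operatorname{SOC}(\varGamma)=\{R\in\operatorname{SO}(d):\varGamma\sim R\varGamma\}$ and $\operatorname{SOS}(\varGamma)=\{R\in\operatorname{SO}(d):\varGamma\sim\alpha R\varGamma\text{ for some }\alpha>0\}$; these are groups and $\operatorname{SOC}(\varGamma)$ is a normal subgroup of $\operatorname{SOS}(\varGamma)$. Here the direct sum is allowed to be trivial (empty). *)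

From HB Require Import structures.
From mathcomp Require Import all_boot all_order all_algebra.
From mathcomp Require Import reals.
Set Implicit Arguments. Unset Strict Implicit. Unset Printing Implicit Defensive.
Import Order.TTheory GRing.Theory Num.Theory.
Local Open Scope ring_scope.

Section Defs.
Variables (R : realType) (d : nat).

Definition vset := 'cV[R]_d -> Prop.

Definition lattice_span (B : 'M[R]_d) : vset :=
  fun x => exists z : 'cV[R]_d, (forall i, z i 0 \is a Num.int) /\ x = B *m z.

Definition is_lattice (L : vset) : Prop :=
  exists B : 'M[R]_d, B \in unitmx /\ forall x, L x <-> lattice_span B x.

Definition setI_v (A C : vset) : vset := fun x => A x /\ C x.

(* H (a subgroup of G) has finite index in G: finitely many cosets x + H cover G *)
Definition finite_index (H G : vset) : Prop :=
  exists s : seq 'cV[R]_d, forall x, G x -> exists2 y, y \in s & H (x - y).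

Definition commensurate (L L' : vset) : Prop :=
  finite_index (setI_v L L') L /\ finite_index (setI_v L L') L'.

Definition image_v (M : 'M[R]_d) (L : vset) : vset :=
  fun y => exists2 x, L x & y = M *m x.

Definition is_SO (M : 'M[R]_d) : Prop := M^T *m M = 1%:M /\ \det M = 1.

Definition SOC (L : vset) : 'M[R]_d -> Prop :=
  fun M => is_SO M /\ commensurate L (image_v M L).

Definition SOS (L : vset) : 'M[R]_d -> Prop :=
  fun M => is_SO M /\ exists2 a : R, 0 < a & commensurate L (image_v (a *: M) L).

Definition mxpow (M : 'M[R]_d) (n : nat) : 'M[R]_d := iter n (mulmx M) 1%:M.

End Defs.

From HB Require Import structures.
From mathcomp Require Import all_boot all_order all_algebra.
From mathcomp Require Import boolp reals.
From mathcomp Require Import zify ring.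
Set Implicit Arguments. Unset Strict Implicit. Unset Printing Implicit Defensive.
Import Order.TTheory GRing.Theory Num.Theory.
Local Open Scope ring_scope.

(* Write Gamma = B Z^d. Then Gamma and X Gamma are commensurate iff the matrix
   B^-1 X B of X in the basis B has rational entries; hence R in SOS(Gamma)
   means that a B^-1 R B is rational for some a > 0. Scalars cancel in a
   commutator, so commutators of SOS(Gamma) lie in SOC(Gamma). Since
   det R = 1, a^d = det (a B^-1 R B) is rational, so B^-1 R^d B is rational
   as well and R^d lies in SOC(Gamma). *)

Lemma invmxM (R : comUnitRingType) n (A C : 'M[R]_n) :
  A \in unitmx -> C \in unitmx -> invmx (A *m C) = invmx C *m invmx A.
Proof.
move=> uA uC; have uAC : A *m C \in unitmx by rewrite unitmx_mul uA.
have : A *m C *m (invmx C *m invmx A) = 1%:M.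
  by rewrite mulmxA mulmxK // mulmxV.
move/(congr1 (mulmx (invmx (A *m C)))).
by rewrite mulmx1 mulmxA mulVmx // mul1mx.
Qed.

Section RationalMx.
Variables (R : realType) (n : nat).
Implicit Types (A C D : 'M[R]_n).

Definition rational_mx A := exists Q : 'M[rat]_n, A = map_mx (@ratr R) Q.

Lemma rational_mx_entrywise A :
  (forall i j, exists q : rat, A i j = ratr q) -> rational_mx A.
Proof.
move=> Aq; have Aq' i j : exists q : rat, A i j == ratr q.
  by have [q ->] := Aq i j; exists q.
exists (\matrix_(i, j) xchoose (Aq' i j)); apply/matrixP => i j.
by rewrite !mxE; apply/eqP/(xchooseP (Aq' i j)).
Qed.

Lemma rational_mx_denom A : rational_mx A ->
  exists2 N : nat, (0 < N)%N & forall i j, N%:R * A i j \is a Num.int.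
Proof.
case=> Q ->; pose den (k : 'I_n * 'I_n) := `|denq (Q k.1 k.2)|%N.
exists (\prod_k den k)%N => [|i j].
  by apply: prodn_gt0 => k; rewrite absz_gt0.
rewrite (bigD1 (i, j)) //= natrM mulrAC mxE natr_absz gtr0_norm ?denq_gt0 //.
rewrite -(ratr_int R) -rmorphM [_%:~R * _]mulrC -numqE rmorph_int.
by rewrite rpredM ?rpred_nat ?intr_int.
Qed.

Lemma rational_mxM A C :
  rational_mx A -> rational_mx C -> rational_mx (A *m C).
Proof. by case=> [P ->] [Q ->]; exists (P *m Q); rewrite map_mxM. Qed.

Lemma rational_mxV A : rational_mx A -> rational_mx (invmx A).
Proof. by case=> P ->; exists (invmx P); rewrite map_invmx. Qed.

Lemma rational_mxZ (c : rat) A : rational_mx A -> rational_mx (ratr c *: A).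
Proof. by case=> P ->; exists (c *: P); rewrite map_mxZ. Qed.

Lemma rational_mx_mxpow A k : rational_mx A -> rational_mx (mxpow A k).
Proof.
case=> Q ->; elim: k => [|k [P eP]]; first by exists 1%:M; rewrite map_mx1.
by exists (Q *m P); rewrite map_mxM -eP.
Qed.

Lemma mxpowZ (c : R) A k : mxpow (c *: A) k = c ^+ k *: mxpow A k.
Proof.
elim: k => [|k IHk]; first by rewrite scale1r.
by rewrite /= IHk -scalemxAl -scalemxAr scalerA exprS.
Qed.

Lemma rational_mx_commutator (a b : R) C D : a != 0 -> b != 0 ->
  C \in unitmx -> D \in unitmx -> rational_mx (a *: C) -> rational_mx (b *: D) ->
  rational_mx (C *m D *m invmx C *m invmx D).
Proof.
move=> a_neq0 b_neq0 uC uD aC bD.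
have -> : C *m D *m invmx C *m invmx D =
    (a *: C) *m (b *: D) *m invmx (a *: C) *m invmx (b *: D).
  rewrite !invmxZ ?unitmxZ ?unitfE //.
  do ![rewrite -scalemxAl | rewrite -scalemxAr | rewrite scalerA].
  have -> : a * (b^-1 / a * b) = 1 by field; apply/andP.
  by rewrite scale1r.
by do !apply: rational_mxM; try apply: rational_mxV.
Qed.

Lemma rational_mx_mxpow_det (a : R) A : a != 0 -> \det A = 1 ->
  rational_mx (a *: A) -> rational_mx (mxpow A n).
Proof.
move=> a_neq0 detA aA; have [Q eQ] := aA.
have an : a ^+ n = ratr (\det Q) by rewrite -det_map_mx -eQ detZ detA mulr1.
have -> : mxpow A n = (a ^+ n)^-1 *: mxpow (a *: A) n.
  by rewrite mxpowZ scalerA mulVf ?scale1r // expf_neq0.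
by rewrite an -fmorphV; apply/rational_mxZ/rational_mx_mxpow.
Qed.

End RationalMx.

Section FiniteIndex.
Variables (R : realType) (n : nat).
Implicit Types (H G : vset R n) (x : 'cV[R]_n).

Lemma finite_index_natmul_mem H G x :
  (forall u v, H u -> H v -> H (u - v)) -> (forall m : nat, G (m%:R *: x)) ->
  finite_index H G -> exists2 k : nat, (0 < k)%N & H (k%:R *: x).
Proof.
move=> subH Gx [s covG].
(* Two of the size s + 1 multiples 0, x, ..., (size s) x share a coset. *)
have /all_sig[f fP] m : {y | y \in s /\ H (m%:R *: x - y)}.
  by apply: cid; have [y ys Hy] := covG _ (Gx m); exists y.
have : ~~ uniq (map f (iota 0 (size s).+1)).
  apply/negP => /uniq_leq_size le_s.
  have /le_s : {subset map f (iota 0 (size s).+1) <= s}.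
    by move=> _ /mapP[m _ ->]; case: (fP m).
  by rewrite size_map size_iota ltnn.
case/(uniqPn 0) => i [j [lt_ij]]; rewrite size_map size_iota => lt_j.
have lt_i := ltn_trans lt_ij lt_j.
rewrite !(nth_map 0) ?size_iota // !nth_iota // !add0n => fij.
exists (j - i)%N; first by rewrite subn_gt0.
have := subH _ _ (fP j).2 (fP i).2.
by rewrite fij opprB addrA subrK -scalerBl -natrB // ltnW.
Qed.

End FiniteIndex.

Section LatticeSpan.
Variables (R : realType) (n : nat).
Implicit Types (B C X : 'M[R]_n) (x y : 'cV[R]_n) (H : vset R n).

Lemma image_lattice_span X B :
  image_v X (lattice_span B) = lattice_span (X *m B).
Proof.
apply/funext => y; apply/propext; split.
  by case=> _ [z [zZ ->]] ->; exists z; rewrite mulmxA.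
by case=> z [zZ ->]; exists (B *m z); [exists z | rewrite mulmxA].
Qed.

Lemma lattice_span_sub B x y : lattice_span B x -> lattice_span B y ->
  lattice_span B (x - y).
Proof.
case=> [z1 [z1Z ->]] [z2 [z2Z ->]]; exists (z1 - z2).
split; last by rewrite mulmxBr.
by move=> i; rewrite !mxE rpredB.
Qed.

Lemma lattice_span_natmul B x (m : nat) : lattice_span B x ->
  lattice_span B (m%:R *: x).
Proof.
case=> z [zZ ->]; exists (m%:R *: z); split; last by rewrite scalemxAr.
by move=> i; rewrite !mxE rpredM ?rpred_nat.
Qed.

Lemma lattice_span_col B j : lattice_span B (col j B).
Proof.
by exists (delta_mx j 0); split => [i|]; rewrite ?colE // mxE rpred_nat.
Qed.

Lemma finite_index_lattice_span B H (N : nat) : (0 < N)%N ->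
  (forall x, lattice_span B x -> H (N%:R *: x)) ->
  finite_index H (lattice_span B).
Proof.
move=> N_gt0 NH.
pose rep (f : {ffun 'I_n -> 'I_N}) := B *m \col_i (f i)%:R.
exists (map rep (enum {ffun 'I_n -> 'I_N})) => _ [z [zZ ->]].
pose k i := Num.floor (z i 0).
have lt_mod i : (absz (k i %% N)%Z < N)%N.
  have := @ltz_pmod (k i) N; have := @modz_ge0 (k i) N.
  have : (0 < N%:Z)%R by rewrite ltz_nat.
  move: (k i %% N)%Z => r; lia.
pose f := [ffun i => Ordinal (lt_mod i)].
exists (rep f); first by rewrite map_f ?mem_enum.
have -> : B *m z - rep f = N%:R *: (B *m \col_i (k i %/ N)%Z%:~R).
  rewrite -mulmxBr scalemxAr; congr (B *m _); apply/matrixP => i j.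
  have N_neq0 : N%:Z != 0 by rewrite eqz_nat -lt0n.
  have /eqP zk : (k i)%:~R == z i 0 by rewrite -intrEfloor.
  rewrite !mxE (ord1 j) ffunE /= -zk natr_absz ger0_norm ?modz_ge0 //.
  by rewrite {1}(divz_eq (k i) N) intrD addrK intrM mulrC.
apply: NH; exists (\col_i (k i %/ N)%Z%:~R); split => // i.
by rewrite mxE intr_int.
Qed.

Lemma rational_mx_of_natmul_cols B C : B \in unitmx ->
  (forall j, exists2 k : nat, (0 < k)%N & lattice_span B (k%:R *: col j C)) ->
  rational_mx (invmx B *m C).
Proof.
move=> uB kC; apply: rational_mx_entrywise => i j.
have [k k_gt0 [z [zZ kCj]]] := kC j.
have /eqP zk : (Num.floor (z i 0))%:~R == z i 0 by rewrite -intrEfloor.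
have BCij : (invmx B *m C) i j = z i 0 / k%:R.
  have := congr1 (fun v => (invmx B *m v) i 0) kCj.
  rewrite mulKmx // -scalemxAr colE mulmxA -colE !mxE => <-.
  by rewrite mulrC mulKf ?pnatr_eq0 -?lt0n.
exists ((Num.floor (z i 0))%:~R / k%:R).
by rewrite BCij fmorph_div rmorph_int rmorph_nat zk.
Qed.

Lemma lattice_span_natmul_sub B C :
  B \in unitmx -> rational_mx (invmx B *m C) ->
  exists2 N : nat, (0 < N)%N &
    forall x, lattice_span C x -> lattice_span B (N%:R *: x).
Proof.
move=> uB /rational_mx_denom[N N_gt0 NZ]; exists N => // _ [z [zZ ->]].
exists ((N%:R *: (invmx B *m C)) *m z); split.
  by move=> i; rewrite mxE rpred_sum // => k _; rewrite rpredM // mxE.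
by rewrite -scalemxAl -scalemxAr !mulmxA mulmxV // mul1mx.
Qed.

Lemma finite_index_setI_lattice_span B C : B \in unitmx ->
  rational_mx (invmx B *m C) ->
  finite_index (setI_v (lattice_span B) (lattice_span C)) (lattice_span C).
Proof.
move=> uB /(lattice_span_natmul_sub uB)[N N_gt0 NB].
apply: (finite_index_lattice_span N_gt0) => x Cx.
by split; [apply: NB | apply: lattice_span_natmul].
Qed.

Lemma commensurate_lattice_spanP B C : B \in unitmx -> C \in unitmx ->
  commensurate (lattice_span B) (lattice_span C) <-> rational_mx (invmx B *m C).
Proof.
move=> uB uC; split=> [[_ fiC] | BC].
  apply: rational_mx_of_natmul_cols => // j.
  case: (finite_index_natmul_mem (x := col j C) _ _ fiC).
  - by move=> u v [Bu Cu] [Bv Cv]; split; apply: lattice_span_sub.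
  - by move=> m; apply/lattice_span_natmul/lattice_span_col.
  by move=> k k_gt0 [kB _]; exists k.
have CB : rational_mx (invmx C *m B).
  by rewrite -[B]invmxK -invmxM ?unitmx_inv //; apply: rational_mxV.
split; last exact: finite_index_setI_lattice_span.
have -> : setI_v (lattice_span B) (lattice_span C) =
          setI_v (lattice_span C) (lattice_span B).
  by apply/funext => x; apply/propext; split=> -[].
exact: finite_index_setI_lattice_span.
Qed.

End LatticeSpan.

Section SpecialOrthogonal.
Variables (R : realType) (n : nat).
Implicit Types (M N : 'M[R]_n).

Lemma is_SO_unitmx M : is_SO M -> M \in unitmx.
Proof. by case=> /mulmx1_unit[]. Qed.

Lemma is_SO_invmx M : is_SO M -> invmx M = M^T.
Proof.
move=> SOM; have [MTM _] := SOM.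
by rewrite -[M^T]mulmx1 -(mulmxV (is_SO_unitmx SOM)) mulmxA MTM mul1mx.
Qed.

Lemma is_SO_mul M N : is_SO M -> is_SO N -> is_SO (M *m N).
Proof.
move=> [MTM detM] [NTN detN]; split; last by rewrite det_mulmx detM detN mulr1.
by rewrite trmx_mul mulmxA -(mulmxA _ _ M) MTM mulmx1.
Qed.

Lemma is_SO_tr M : is_SO M -> is_SO M^T.
Proof.
by case=> MTM detM; split; [rewrite trmxK; apply: mulmx1C | rewrite det_tr].
Qed.

Lemma is_SO_mxpow M k : is_SO M -> is_SO (mxpow M k).
Proof.
move=> SOM; elim: k => [|k IHk]; last exact: is_SO_mul.
by split; rewrite ?trmx1 ?mulmx1 ?det1.
Qed.

End SpecialOrthogonal.

Section MatrixInBasis.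
Variables (R : realType) (n : nat) (B : 'M[R]_n).
Hypothesis uB : B \in unitmx.
Implicit Types (X Y M N : 'M[R]_n).

Definition mx_in_basis X := invmx B *m X *m B.

Lemma mx_in_basisM X Y : mx_in_basis (X *m Y) = mx_in_basis X *m mx_in_basis Y.
Proof. by rewrite /mx_in_basis !mulmxA mulmxK. Qed.

Lemma mx_in_basisV X :
  X \in unitmx -> mx_in_basis (invmx X) = invmx (mx_in_basis X).
Proof.
move=> uX; rewrite /mx_in_basis !invmxM ?unitmx_mul ?unitmx_inv ?uX ?uB //.
by rewrite invmxK mulmxA.
Qed.

Lemma mx_in_basisZ (c : R) X : mx_in_basis (c *: X) = c *: mx_in_basis X.
Proof. by rewrite /mx_in_basis -scalemxAr -scalemxAl. Qed.

Lemma mx_in_basis_mxpow X k : mx_in_basis (mxpow X k) = mxpow (mx_in_basis X) k.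
Proof.
elim: k => [|k IHk]; first by rewrite /mx_in_basis /= mulmx1 mulVmx.
by rewrite /= mx_in_basisM IHk.
Qed.

Lemma det_mx_in_basis X : \det (mx_in_basis X) = \det X.
Proof.
rewrite /mx_in_basis !det_mulmx det_inv mulrAC mulVf ?mul1r //.
by rewrite -unitfE -unitmxE.
Qed.

Lemma unitmx_in_basis X : (mx_in_basis X \in unitmx) = (X \in unitmx).
Proof. by rewrite !unitmxE det_mx_in_basis. Qed.

Lemma commensurate_image_lattice_spanP X : X \in unitmx ->
  commensurate (lattice_span B) (image_v X (lattice_span B)) <->
  rational_mx (mx_in_basis X).
Proof.
move=> uX; rewrite image_lattice_span /mx_in_basis -mulmxA.
by apply: commensurate_lattice_spanP; rewrite ?unitmx_mul ?uX.
Qed.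

Lemma SOS_lattice_span_rational M : SOS (lattice_span B) M ->
  exists2 a : R, a != 0 & rational_mx (a *: mx_in_basis M).
Proof.
case=> SOM [a a_gt0 comm_aM]; exists a; first by rewrite gt_eqF.
rewrite -mx_in_basisZ -commensurate_image_lattice_spanP //.
by rewrite unitmxZ ?unitfE ?gt_eqF ?is_SO_unitmx.
Qed.

Lemma SOC_lattice_span X : is_SO X -> rational_mx (mx_in_basis X) ->
  SOC (lattice_span B) X.
Proof.
by move=> SOX BX; split; rewrite ?commensurate_image_lattice_spanP ?is_SO_unitmx.
Qed.

Lemma SOS_commutator_SOC M N : SOS (lattice_span B) M -> SOS (lattice_span B) N ->
  SOC (lattice_span B) (M *m N *m invmx M *m invmx N).
Proof.
move=> SOSM SOSN; have [SOM _] := SOSM; have [SON _] := SOSN.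
have [uM uN] := (is_SO_unitmx SOM, is_SO_unitmx SON).
apply: SOC_lattice_span.
  rewrite !is_SO_invmx //; apply/is_SO_mul/is_SO_tr => //.
  by apply/is_SO_mul/is_SO_tr => //; apply: is_SO_mul.
have [[a a_neq0 aM] [b b_neq0 bN]] := (SOS_lattice_span_rational SOSM,
  SOS_lattice_span_rational SOSN).
rewrite !mx_in_basisM !mx_in_basisV //.
by apply: (rational_mx_commutator a_neq0 b_neq0); rewrite ?unitmx_in_basis.
Qed.

Lemma SOS_mxpow_SOC M :
  SOS (lattice_span B) M -> SOC (lattice_span B) (mxpow M n).
Proof.
move=> SOSM; have [SOM _] := SOSM.
have [a a_neq0 aM] := SOS_lattice_span_rational SOSM.
apply: SOC_lattice_span; first exact: is_SO_mxpow.
rewrite mx_in_basis_mxpow; apply: (rational_mx_mxpow_det a_neq0 _ aM).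
by rewrite det_mx_in_basis; case: SOM.
Qed.

End MatrixInBasis.

Theorem mainTheorem4 (R : realType) (p : nat) (hp : prime p)
    (L : vset R p) (hL : is_lattice L) :
  (forall M N : 'M[R]_p, SOS L M -> SOS L N ->
     SOC L (M *m N *m invmx M *m invmx N)) /\
  (forall M : 'M[R]_p, SOS L M -> SOC L (mxpow M p)).
Proof.
case: hL => B [uB LB].
have -> : L = lattice_span B by apply/funext => x; apply/propext.
by split; [apply: SOS_commutator_SOC | apply: SOS_mxpow_SOC].
Qed.
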